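(* Let $X$ be the vertex set of a dual polar graph of diameter $d$ with distance $\partial$ and base vertex $u_0\in X$. Let $x,y\in X$, $U=x\cap y$, $\ell=\dim(u_0\cap U)$, and $X'=\{z\in X: U\subseteq z\}$. Then the pointwise product satisfies \[ f_xf_y=\sum_{\substack{z\in X'\\ f_x(z)=f_y(z)=1}} f_z\ \in\ \mathrm{Hom}_{d-\ell}(X). \]
   Context: Let $V$ be a finite-dimensional vector space over a finite field with a non-degenerate alternating, Hermitian, or quadratic form of Witt index $d$; $X$ is the set of maximal totally isotropic subspaces (dimension $d$), adjacent iff their intersection has dimension $d-1$, with distance $\partial(x,y)=d-\dim(x\cap y)$. Shells: $X_j=\{z\in X:\partial(u_0,z)=j\}$. For $z\in X$, $f_z:X\to\mathbb{R}$ is defined by $f_z(w)=1$ if $\partial(u_0,z)+\partial(z,w)=\partial(u_0,w)$ and $f_z(w)=0$ otherwise. $\mathrm{Hom}_j(X)=\mathrm{span}\{f_z : z\in X_j\}$. *)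

(* Dual polar graphs over a finite field F.
   Vectors: 'rV[F]_n.  Subspaces of V = F^n are represented canonically by
   square matrices A : 'M[F]_n with <<A>>%MS = A (row space). *)
From HB Require Import structures.
From mathcomp Require Import all_boot all_order all_algebra.
From mathcomp Require Import reals.
Set Implicit Arguments. Unset Strict Implicit. Unset Printing Implicit Defensive.
Import Order.TTheory GRing.Theory Num.Theory.
Local Open Scope ring_scope.

(* The three kinds of forms, given by Gram matrices:
   - Alt M      : B(u,v) = u M v^T (alternating bilinear form),
   - Herm s M   : B(u,v) = u M (v^s)^T (Hermitian w.r.t. a field involution s),
   - Quad M     : Q(v) = v M v^T (quadratic form), polar form
                  B(u,v) = Q(u+v) - Q(u) - Q(v). *)
Inductive dpform (F : finFieldType) (n : nat) :=
| Alt of 'M[F]_n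
| Herm of {rmorphism F -> F} & 'M[F]_n
| Quad of 'M[F]_n.

Section DualPolar.
Variables (F : finFieldType) (n : nat).

Definition bil (M : 'M[F]_n) (u v : 'rV[F]_n) : F := (u *m M *m v^T) ord0 ord0.

Definition dp_B (phi : dpform F n) (u v : 'rV[F]_n) : F :=
  match phi with
  | Alt M => bil M u v
  | Herm s M => bil M u (map_mx s v)
  | Quad M => bil M (u + v) (u + v) - bil M u u - bil M v v
  end.

Definition dp_Q (phi : dpform F n) (v : 'rV[F]_n) : F :=
  match phi with
  | Quad M => bil M v v
  | _ => 0
  end.

Definition dp_valid (phi : dpform F n) : Prop :=
  match phi with
  | Alt M => forall u, bil M u u = 0
  | Herm s M => (forall a, s (s a) = a) /\ (exists a, s a != a) /\
                (forall u v, dp_B phi u v = s (dp_B phi v u))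
  | Quad M => True
  end.

Definition dp_nondeg (phi : dpform F n) : Prop :=
  match phi with
  | Quad _ => forall u, (forall v, dp_B phi u v = 0) -> dp_Q phi u = 0 -> u = 0
  | _ => forall u, (forall v, dp_B phi u v = 0) -> u = 0
  end.

Definition tot_iso (phi : dpform F n) (A : 'M[F]_n) : bool :=
  match phi with
  | Quad _ => [forall u : 'rV[F]_n, (u <= A)%MS ==> (dp_Q phi u == 0)]
  | _ => [forall u : 'rV[F]_n, forall v : 'rV[F]_n,
           ((u <= A)%MS && (v <= A)%MS) ==> (dp_B phi u v == 0)]
  end.

Definition witt (phi : dpform F n) : nat :=
  \max_(A : 'M[F]_n | tot_iso phi A) \rank A.

Definition dpX (phi : dpform F n) : {set 'M[F]_n} :=
  [set A : 'M[F]_n | [&& (<<A>>%MS == A), tot_iso phi A & \rank A == witt phi]].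

Definition dpdist (phi : dpform F n) (x y : 'M[F]_n) : nat :=
  witt phi - \rank (x :&: y)%MS.

Definition shell (phi : dpform F n) (u0 : 'M[F]_n) (j : nat) : {set 'M[F]_n} :=
  [set z in dpX phi | dpdist phi u0 z == j].

Variable R : realType.

Definition fz (phi : dpform F n) (u0 z w : 'M[F]_n) : R :=
  if dpdist phi u0 z + dpdist phi z w == dpdist phi u0 w then 1 else 0.

(* g : X -> R (given on all matrices, only values on X matter) lies in
   Hom_j(X) = span { f_z : z in X_j } *)
Definition in_Hom (phi : dpform F n) (u0 : 'M[F]_n) (j : nat) (g : 'M[F]_n -> R) : Prop :=
  exists c : 'M[F]_n -> R,
    forall w, w \in dpX phi -> g w = \sum_(z in shell phi u0 j) c z * fz phi u0 z w.

End DualPolar.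

From HB Require Import structures.
From mathcomp Require Import all_boot all_order all_algebra.
From mathcomp Require Import reals ring zify.
Set Implicit Arguments. Unset Strict Implicit. Unset Printing Implicit Defensive.
Import Order.TTheory GRing.Theory Num.Theory.
Local Open Scope ring_scope.

(* Write [between u z w] for d(u, z) + d(z, w) = d(u, w), so that f_z(w) = 1 exactly
   when [between u0 z w].  By the triangle inequality [between] is transitive, and
   for subspaces of rank d it holds iff z = (u :&: z) + (z :&: w) and u :&: w <= z.
   If x and y are both between u0 and w, put A = u0 :&: x :&: y.  The totally
   isotropic space z0 = A + (w :&: A^perp) has rank d, contains x :&: y, lies
   between u0 and w, and x, y lie between u0 and z0.  Any vertex z containing
   x :&: y with the same three properties satisfies
   z <= (u0 :&: z) + (z :&: w) <= A + (w :&: A^perp), hence z = z0 by rank.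
   So the sum has exactly one nonzero term when f_x(w) f_y(w) = 1, and none
   otherwise by transitivity.  Finally u0 :&: z = A for each z in the sum, so all
   these z lie in the shell X_(d - l). *)

Section Form.
Variables (F : finFieldType) (n : nat).
Implicit Types (phi : dpform F n) (u v : 'rV[F]_n) (A C w z : 'M[F]_n).

Definition gram phi : 'M[F]_n :=
  match phi with Alt M => M | Herm _ M => M | Quad M => M + M^T end.

Definition twist phi m p (B : 'M[F]_(m, p)) : 'M[F]_(m, p) :=
  match phi with Herm s _ => map_mx s B | _ => B end.

Lemma twistD phi m p (B1 B2 : 'M[F]_(m, p)) :
  twist phi (B1 + B2) = twist phi B1 + twist phi B2.
Proof. by case: phi => //= s M; rewrite map_mxD. Qed.

Lemma twistM phi m p q (B1 : 'M[F]_(m, p)) (B2 : 'M[F]_(p, q)) :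
  twist phi (B1 *m B2) = twist phi B1 *m twist phi B2.
Proof. by case: phi => //= s M; rewrite map_mxM. Qed.

Lemma twist_row phi m p i (B : 'M[F]_(m, p)) : twist phi (row i B) = row i (twist phi B).
Proof. by case: phi => //= s M; rewrite map_row. Qed.

Lemma mxrank_twist phi m p (B : 'M[F]_(m, p)) : \rank (twist phi B) = \rank B.
Proof. by case: phi => //= s M; rewrite mxrank_map. Qed.

Lemma dp_BE phi u v : dp_B phi u v = (u *m gram phi *m (twist phi v)^T) 0 0.
Proof.
case: phi => [M|s M|M] //=; rewrite /bil.
have trE : (v *m M *m u^T) 0 0 = (u *m M^T *m v^T) 0 0.
  transitivity ((v *m M *m u^T)^T 0 0); first by rewrite [RHS]mxE.
  by rewrite !trmx_mul trmxK mulmxA.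
have addE (B1 B2 : 'M[F]_1) : (B1 + B2) 0 0 = B1 0 0 + B2 0 0 by rewrite mxE.
rewrite linearD /= !mulmxDl !mulmxDr !addE trE mulmxDl addE; ring.
Qed.

Lemma dp_BDl phi u1 u2 v : dp_B phi (u1 + u2) v = dp_B phi u1 v + dp_B phi u2 v.
Proof. by rewrite !dp_BE !mulmxDl mxE. Qed.

Lemma dp_BDr phi u v1 v2 : dp_B phi u (v1 + v2) = dp_B phi u v1 + dp_B phi u v2.
Proof. by rewrite !dp_BE twistD linearD /= mulmxDr mxE. Qed.

Lemma dp_B_sym0 phi u v : dp_valid phi -> dp_B phi u v = 0 -> dp_B phi v u = 0.
Proof.
case: phi => [M|s M|M] /=.
- move=> alt Buv; have := alt (u + v).
  have := dp_BDl (Alt M) u v (u + v); have := dp_BDr (Alt M) u u v.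
  have := dp_BDr (Alt M) v u v; rewrite /= => -> -> ->.
  by rewrite !alt Buv !(add0r, addr0).
- by move=> [_ [_ herm]] Buv; rewrite herm Buv rmorph0.
by move=> _; rewrite (addrC v u) => <-; rewrite -!addrA; congr (_ + _); exact: addrC.
Qed.

Definition perp phi m (B : 'M[F]_(m, n)) : 'M[F]_n := kermx (gram phi *m (twist phi B)^T).

Lemma sub_perpP phi m (B : 'M[F]_(m, n)) v :
  (v <= perp phi B)%MS <-> (forall a, (a <= B)%MS -> dp_B phi v a = 0).
Proof.
split.
  move/sub_kermxP => vB0 a /submxP [c ->].
  by rewrite dp_BE twistM trmx_mul !mulmxA -(mulmxA v) vB0 mul0mx mxE.
have entry j : (v *m (gram phi *m (twist phi B)^T)) 0 j = dp_B phi v (row j B).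
  by rewrite dp_BE twist_row tr_row mulmxA !mxE; apply: eq_bigr => k _; rewrite !mxE.
by move=> vB0; apply/sub_kermxP/rowP => j; rewrite entry vB0 ?row_sub // mxE.
Qed.

Lemma mxrank_perp phi m (B : 'M[F]_(m, n)) : (n - \rank B <= \rank (perp phi B))%N.
Proof.
rewrite mxrank_ker leq_sub2l //.
by rewrite (leq_trans (mxrankM_maxr _ _)) // mxrank_tr mxrank_twist.
Qed.

Lemma tot_iso_dp_B phi A u v :
  tot_iso phi A -> (u <= A)%MS -> (v <= A)%MS -> dp_B phi u v = 0.
Proof.
move=> + uA vA; case: phi => [M|s M|M] /=.
- by move/forallP/(_ u)/forallP/(_ v); rewrite uA vA => /eqP.
- by move/forallP/(_ u)/forallP/(_ v); rewrite uA vA => /eqP.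
move=> /forallP isoA; have Q0 a : (a <= A)%MS -> bil M a a = 0.
  by move=> aA; have := isoA a; rewrite aA => /eqP.
by rewrite !Q0 ?addmx_sub // !subr0.
Qed.

Lemma tot_isoS phi A C : (C <= A)%MS -> tot_iso phi A -> tot_iso phi C.
Proof.
move=> CA; case: phi => [M|s M|M] /= /forallP isoA; apply/forallP => a.
- apply/forallP => b; apply/implyP => /andP[aC bC].
  by have /forallP/(_ b) := isoA a; rewrite !(submx_trans _ CA).
- apply/forallP => b; apply/implyP => /andP[aC bC].
  by have /forallP/(_ b) := isoA a; rewrite !(submx_trans _ CA).
by apply/implyP => aC; have := isoA a; rewrite (submx_trans aC CA).
Qed.

Lemma tot_iso_sub_perp phi A z : tot_iso phi z -> (A <= z)%MS -> (z <= perp phi A)%MS.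
Proof.
move=> isoz Az; apply/rV_subP => v vz; apply/sub_perpP => a aA.
exact: tot_iso_dp_B isoz vz (submx_trans aA Az).
Qed.

Definition adjoin_perp phi A w : 'M[F]_n := (A + (w :&: perp phi A))%MS.

Lemma tot_iso_adjoin_perp phi A w : dp_valid phi -> tot_iso phi A -> tot_iso phi w ->
  tot_iso phi (adjoin_perp phi A w).
Proof.
move=> val isoA isow.
have split_sub (a : 'rV[F]_n) : (a <= adjoin_perp phi A w)%MS -> exists a1 a2,
    [/\ a = a1 + a2, (a1 <= A)%MS, (a2 <= w)%MS & (a2 <= perp phi A)%MS].
  case/sub_addsmxP => [[c1 c2] ->]; exists (c1 *m A), (c2 *m (w :&: perp phi A))%MS.
  by have := submxMl c2 (w :&: perp phi A)%MS; rewrite sub_capmx submxMl => /andP[].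
have B0 (a b : 'rV[F]_n) :
    (a <= adjoin_perp phi A w)%MS -> (b <= adjoin_perp phi A w)%MS -> dp_B phi a b = 0.
  move=> /split_sub [a1 [a2 [-> a1A a2w a2P]]] /split_sub [b1 [b2 [-> b1A b2w b2P]]].
  rewrite !dp_BDl !dp_BDr (tot_iso_dp_B isoA a1A b1A) (tot_iso_dp_B isow a2w b2w).
  rewrite ((sub_perpP _ _ _).1 a2P _ b1A).
  by rewrite (dp_B_sym0 val ((sub_perpP _ _ _).1 b2P _ a1A)) !addr0.
move: isoA isow split_sub B0; case: phi val => [M|s M|M] /= _ isoA isow split_sub B0.
- by apply/'forall_forallP => a b; apply/implyP => /andP[aC bC]; rewrite B0.
- by apply/'forall_forallP => a b; apply/implyP => /andP[aC bC]; rewrite B0.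
apply/forallP => a; apply/implyP => aC; apply/eqP.
have [a1 [a2 [Ea a1A a2w a2P]]] := split_sub a aC.
have Q0 (b : 'rV[F]_n) B : tot_iso (Quad M) B -> (b <= B)%MS -> bil M b b = 0.
  by move=> /forallP /(_ b) /implyP isoB /isoB /eqP.
have a2C : (a2 <= adjoin_perp (Quad M) A w)%MS.
  by rewrite (submx_trans _ (addsmxSr _ _)) // sub_capmx a2w.
have := B0 a1 a2 (submx_trans a1A (addsmxSl _ _)) a2C.
by rewrite /= Ea (Q0 _ _ isoA a1A) (Q0 _ _ isow a2w) !subr0.
Qed.

Lemma mxrank_adjoin_perp phi A w :
  tot_iso phi w -> (\rank w <= \rank (adjoin_perp phi A w))%N.
Proof.
move=> isow; rewrite /adjoin_perp; set D := (A :\: w)%MS.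
have A_D : (D + A :&: w :=: A)%MS := addsmx_diff_cap_eq A w.
have rkA : \rank A = (\rank D + \rank (A :&: w))%N.
  rewrite -{1}A_D mxrank_disjoint_sum //; apply/eqP; rewrite -submx0.
  by rewrite -(capmx_diff A w) capmxS // capmxSr.
(* w is orthogonal to A :&: w, so only the part D of A cuts down w :&: perp A *)
have wD_wA : (w :&: perp phi D <= w :&: perp phi A)%MS.
  rewrite sub_capmx capmxSl /=; apply/rV_subP => v; rewrite sub_capmx => /andP[vw vD].
  apply/sub_perpP => a; rewrite -A_D => /sub_addsmxP [[c1 c2] ->] /=.
  rewrite dp_BDr ((sub_perpP _ _ _).1 vD _ (submxMl _ _)) add0r.
  exact: tot_iso_dp_B isow vw (submx_trans (submxMl _ _) (capmxSr _ _)).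
have := mxrankS wD_wA; have := mxrank_sum_cap w (perp phi D).
have := rank_leq_col (w + perp phi D)%MS; have := mxrank_perp phi D.
have := mxrank_sum_cap A (w :&: perp phi A)%MS.
have : (\rank (A :&: (w :&: perp phi A)) <= \rank (A :&: w))%N.
  by rewrite mxrankS // capmxS // capmxSl.
have := rank_leq_col D; lia.
Qed.

Lemma dpXP phi z :
  reflect [/\ <<z>>%MS = z, tot_iso phi z & \rank z = witt phi] (z \in dpX phi).
Proof. by rewrite inE; apply: (iffP and3P) => -[/eqP ? ? /eqP ?]; split=> //; apply/eqP. Qed.

Lemma rank_le_witt phi A : tot_iso phi A -> (\rank A <= witt phi)%N.
Proof. by move=> isoA; apply: leq_bigmax_cond. Qed.

Lemma adjoin_perp_in_dpX phi A w : dp_valid phi -> tot_iso phi A -> w \in dpX phi ->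
  <<adjoin_perp phi A w>>%MS \in dpX phi.
Proof.
move=> val isoA /dpXP[_ isow rkw]; have isoC := tot_iso_adjoin_perp val isoA isow.
apply/dpXP; split; rewrite ?genmx_id ?mxrank_gen //.
  by apply: tot_isoS isoC; rewrite genmxE.
by apply/eqP; rewrite eqn_leq rank_le_witt //= -rkw mxrank_adjoin_perp.
Qed.
End Form.

Section Geodesics.
Variables (K : fieldType) (n d : nat).
Implicit Types (u x y z w : 'M[K]_n).

Definition gdist x y := (d - \rank (x :&: y))%N.

Definition between u z w := (gdist u z + gdist z w == gdist u w)%N.

Lemma mxrank_cap_triangle x z w :
  (\rank (x :&: z) + \rank (z :&: w) <= \rank z + \rank (x :&: w))%N.
Proof.
rewrite -mxrank_sum_cap leq_add // mxrankS //.
  by rewrite addsmx_sub capmxSr capmxSl.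
by rewrite capmxS ?capmxSl ?capmxSr.
Qed.

Lemma gdist_triangle x z w : \rank z = d -> (gdist x w <= gdist x z + gdist z w)%N.
Proof.
move=> rkz; have := mxrank_cap_triangle x z w; rewrite /gdist.
have := mxrankS (capmxSr x z); have := mxrankS (capmxSl z w); lia.
Qed.

Lemma betweenE u z w : \rank u = d -> \rank z = d -> \rank w = d ->
  between u z w = (z <= (u :&: z) + (z :&: w))%MS && (u :&: w <= z)%MS.
Proof.
move=> rku rkz rkw.
have sum_z : ((u :&: z) + (z :&: w) <= z)%MS by rewrite addsmx_sub capmxSr capmxSl.
have cap_uw : ((u :&: z) :&: (z :&: w) <= u :&: w)%MS by rewrite capmxS ?capmxSl ?capmxSr.
have := mxrank_sum_cap (u :&: z)%MS (z :&: w)%MS; have := mxrankS sum_z.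
have := mxrankS cap_uw; have := mxrankS (capmxSl u z); have := mxrankS (capmxSr z w).
have := mxrankS (capmxSl u w); rewrite /between /gdist => r1 r2 r3 r4 r5 r6.
apply/idP/andP => [/eqP dist_eq | [z_sum uw_z]].
  split; first by rewrite -(mxrank_leqif_sup sum_z).2; apply/eqP; lia.
  apply: submx_trans (submx_trans (capmxSr (u :&: z)%MS _) (capmxSl z w)).
  by rewrite -(mxrank_leqif_sup cap_uw).2; apply/eqP; lia.
have uw_cap : (u :&: w <= (u :&: z) :&: (z :&: w))%MS.
  by rewrite !sub_capmx capmxSl capmxSr uw_z.
have := mxrankS z_sum; have := mxrankS uw_cap; move=> r7 r8; apply/eqP; lia.
Qed.

Lemma between_trans u x z w : \rank x = d -> \rank z = d ->
  between u x z -> between u z w -> between u x w.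
Proof.
move=> rkx rkz /eqP uxz /eqP uzw; apply/eqP.
have := gdist_triangle x w rkz; have := gdist_triangle u w rkx; lia.
Qed.

Section Pair.
Variables u x y : 'M[K]_n.
Hypotheses (rku : \rank u = d) (rkx : \rank x = d) (rky : \rank y = d).

Lemma between_cap_sub z : \rank z = d -> between u x z -> between u y z ->
  (u :&: z <= u :&: (x :&: y))%MS.
Proof.
move=> rkz; rewrite !betweenE // => /andP[_ uzx] /andP[_ uzy].
by rewrite sub_capmx capmxSl sub_capmx uzx.
Qed.

Lemma cap_sub_base_adds w : \rank w = d -> between u x w -> between u y w ->
  (x :&: y <= u :&: (x :&: y) + (x :&: y) :&: w)%MS.
Proof.
move=> rkw; rewrite !betweenE // => /andP[x_sum uw_x] /andP[y_sum uw_y].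
have capl (A B : 'M[K]_n) (c : 'rV[K]_n) : (c *m (A :&: B) <= A)%MS.
  exact: submx_trans (submxMl _ _) (capmxSl _ _).
have capr (A B : 'M[K]_n) (c : 'rV[K]_n) : (c *m (A :&: B) <= B)%MS.
  exact: submx_trans (submxMl _ _) (capmxSr _ _).
apply/rV_subP => v; rewrite sub_capmx => /andP[vx vy].
case/sub_addsmxP: (submx_trans vx x_sum) => -[c1 c2] /=; set p := c1 *m _; set q := c2 *m _.
move=> vE; case/sub_addsmxP: (submx_trans vy y_sum) => -[e1 e2] /=.
set p' := e1 *m _; set q' := e2 *m _ => vE'.
have pu : (p <= u)%MS := capl _ _ c1; have px : (p <= x)%MS := capr _ _ c1.
(* p - p' = q' - q lies in u :&: w, which is contained in y *)
have dp_uw : (p - p' <= u :&: w)%MS.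
  rewrite sub_capmx addmx_sub ?eqmx_opp ?capl //=.
  have -> : p - p' = q' - q by apply/eqP; rewrite subr_eq addrAC eq_sym subr_eq -vE vE' addrC.
  by rewrite addmx_sub ?eqmx_opp ?capr.
have py : (p <= y)%MS.
  by rewrite -[p](subrK p') addmx_sub ?capr // (submx_trans dp_uw uw_y).
have pA : (p <= u :&: (x :&: y))%MS by rewrite !sub_capmx pu px py.
have qU : (q <= x :&: y)%MS.
  have -> : q = v - p by rewrite vE addrC addKr.
  by rewrite addmx_sub ?eqmx_opp ?sub_capmx ?vx ?vy ?px ?py.
by rewrite vE addmx_sub_adds // sub_capmx qU capr.
Qed.

End Pair.
End Geodesics.

Lemma fzE (F : finFieldType) n (phi : dpform F n) (R : realType) u z w :
  fz R phi u z w = (between (witt phi) u z w)%:R.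
Proof. by rewrite /fz /between /gdist /dpdist; case: ifP. Qed.

Lemma fz_eq1 (F : finFieldType) n (phi : dpform F n) (R : realType) u z w :
  (fz R phi u z w == 1) = between (witt phi) u z w.
Proof. by rewrite fzE pnatr_eq1; case: between. Qed.

Section Interval.
Variables (F : finFieldType) (n : nat) (phi : dpform F n).
Hypothesis val : dp_valid phi.
Variables u x y : 'M[F]_n.
Hypotheses (uX : u \in dpX phi) (xX : x \in dpX phi) (yX : y \in dpX phi).

Local Notation d := (witt phi).
Local Notation between := (between d).
Local Notation A := (u :&: (x :&: y))%MS.

Let rkX z : z \in dpX phi -> \rank z = d.
Proof. by case/dpXP. Qed.

Lemma tot_iso_base_cap : tot_iso phi A.
Proof. by case/dpXP: uX => _ isou _; apply: tot_isoS isou; apply: capmxSl. Qed.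

Lemma cap_in_shell z : z \in dpX phi -> (x :&: y <= z)%MS ->
  between u x z -> between u y z -> z \in shell phi u (d - \rank A).
Proof.
move=> zX Uz bxz byz.
have uz_A := between_cap_sub (rkX uX) (rkX xX) (rkX yX) (rkX zX) bxz byz.
have uz_eq : (u :&: z == A)%MS by rewrite uz_A capmxS.
by rewrite inE zX /dpdist (eqmx_rank uz_eq) eqxx.
Qed.

Section Witness.
Variable w : 'M[F]_n.
Hypotheses (wX : w \in dpX phi) (bxw : between u x w) (byw : between u y w).

Local Notation C := (adjoin_perp phi A w).

Lemma witness_in_dpX : <<C>>%MS \in dpX phi.
Proof. exact: adjoin_perp_in_dpX val tot_iso_base_cap wX. Qed.

Lemma base_cap_witness : (u :&: <<C>> <= A)%MS.
Proof.
have uw_A := between_cap_sub (rkX uX) (rkX xX) (rkX yX) (rkX wX) bxw byw.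
apply/rV_subP => v; rewrite sub_capmx genmxE => /andP[vu].
case/sub_addsmxP => -[c1 c2] /= vE; set a := c1 *m _ in vE; set b := c2 *m _ in vE.
have aA : (a <= A)%MS := submxMl _ _.
have bw : (b <= w)%MS := submx_trans (submxMl _ _) (capmxSl _ _).
have bu : (b <= u)%MS.
  have -> : b = v - a by rewrite vE addrC addKr.
  by rewrite addmx_sub ?eqmx_opp // (submx_trans aA) ?capmxSl.
by rewrite vE addmx_sub // (submx_trans _ uw_A) // sub_capmx bu.
Qed.

Let rkC : \rank <<C>> = d := rkX witness_in_dpX.

Lemma between_witness z : z \in dpX phi -> (A <= z)%MS -> between u z w ->
  between u z <<C>>%MS.
Proof.
move=> zX Az; have [_ isoz rkz] := dpXP _ _ zX.
rewrite !betweenE ?rkC ?(rkX uX) ?(rkX wX) // => /andP[z_sum _].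
rewrite (submx_trans base_cap_witness Az) andbT (submx_trans z_sum) // addsmxS //.
rewrite sub_capmx capmxSl genmxE (submx_trans _ (addsmxSr _ _)) //=.
by rewrite sub_capmx capmxSr (submx_trans (capmxSl _ _)) ?tot_iso_sub_perp.
Qed.

Lemma witness_between : between u <<C>>%MS w.
Proof.
have uw_A := between_cap_sub (rkX uX) (rkX xX) (rkX yX) (rkX wX) bxw byw.
rewrite betweenE ?rkC ?(rkX uX) ?(rkX wX) //; apply/andP; split.
  by rewrite genmxE addsmxS // sub_capmx genmxE ?addsmxSl ?addsmxSr ?capmxSl.
by rewrite genmxE (submx_trans uw_A) ?addsmxSl.
Qed.

Lemma cap_sub_witness : (x :&: y <= <<C>>)%MS.
Proof.
have [_ isox _] := dpXP _ _ xX.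
have A_x : (A <= x)%MS by rewrite (submx_trans (capmxSr _ _)) ?capmxSl.
apply: submx_trans (cap_sub_base_adds (rkX uX) (rkX xX) (rkX yX) (rkX wX) bxw byw) _.
rewrite genmxE addsmxS // sub_capmx capmxSr /=.
by rewrite (submx_trans _ (tot_iso_sub_perp isox A_x)) // !(submx_trans (capmxSl _ _)).
Qed.

Lemma witness_unique z : z \in dpX phi -> (x :&: y <= z)%MS ->
  between u x z -> between u y z -> between u z w -> z = <<C>>%MS.
Proof.
move=> zX Uz bxz byz; have [genz isoz rkz] := dpXP _ _ zX.
have uz_A := between_cap_sub (rkX uX) (rkX xX) (rkX yX) rkz bxz byz.
have A_z : (A <= z)%MS := submx_trans (capmxSr _ _) Uz.
rewrite betweenE ?(rkX uX) ?(rkX wX) // => /andP[z_sum _].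
have z_C : (z <= C)%MS.
  apply: submx_trans z_sum (addsmxS uz_A _).
  by rewrite sub_capmx capmxSr (submx_trans (capmxSl _ _)) ?tot_iso_sub_perp.
have z_eq_C : (z == C)%MS.
  by rewrite -(mxrank_leqif_eq z_C).2 eqn_leq mxrankS //= rkz -rkC mxrank_gen.
by rewrite -genz; apply/genmxP.
Qed.
End Witness.

Variable R : realType.
Local Notation f := (fz R phi u).
Local Notation X' := [set z in dpX phi | (x :&: y <= z)%MS].

Lemma sum_fz_interval w : w \in dpX phi ->
  \sum_(z in X' | (f x z == 1) && (f y z == 1)) f z w = f x w * f y w.
Proof.
move=> wX; rewrite (fzE _ _ _ x) (fzE _ _ _ y) -natrM mulnb.
have [/andP[bxw byw] | not_bw] := boolP (between u x w && between u y w).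
  have A_x : (A <= x)%MS by rewrite (submx_trans (capmxSr _ _)) ?capmxSl.
  have A_y : (A <= y)%MS by rewrite (submx_trans (capmxSr _ _)) ?capmxSr.
  rewrite (bigD1 <<adjoin_perp phi A w>>%MS) /=; last first.
    by rewrite inE witness_in_dpX ?cap_sub_witness ?fz_eq1 ?between_witness.
  rewrite fzE witness_between // big1 ?addr0 // => z /andP[/andP[]].
  rewrite inE fz_eq1 fz_eq1 => /andP[zX Uz] /andP[bxz byz] z_ne.
  apply/eqP; rewrite fzE pnatr_eq0 eqb0; apply: contra z_ne => bzw.
  by rewrite (witness_unique wX zX Uz bxz byz bzw).
rewrite big1 // => z /andP[]; rewrite inE fz_eq1 fz_eq1 => /andP[zX _] /andP[bxz byz].
apply/eqP; rewrite fzE pnatr_eq0 eqb0; apply: contra not_bw => bzw.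
by rewrite !(between_trans _ (rkX zX) _ bzw) ?(rkX xX) ?(rkX yX).
Qed.

Lemma fz_prod_in_Hom : in_Hom phi u (d - \rank A) (fun w => f x w * f y w).
Proof.
exists (fun z => ((z \in X') && ((f x z == 1) && (f y z == 1)))%:R) => w wX.
rewrite -sum_fz_interval // big_mkcond [RHS]big_mkcond; apply: eq_bigr => z _.
case: ifP => [zI | _]; last by rewrite mul0r if_same.
move: zI; rewrite inE fz_eq1 fz_eq1 => /andP[/andP[zX Uz] /andP[bxz byz]].
by rewrite cap_in_shell ?mul1r.
Qed.
End Interval.

Theorem propositionA5 (F : finFieldType) (n : nat) (phi : dpform F n)
  (R : realType) (u0 x y : 'M[F]_n) :
  dp_valid phi -> dp_nondeg phi ->
  u0 \in dpX phi -> x \in dpX phi -> y \in dpX phi ->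
  let U := (x :&: y)%MS in
  let l := \rank (u0 :&: U)%MS in
  let X' := [set z in dpX phi | (U <= z)%MS] in
  (forall w, w \in dpX phi ->
     fz R phi u0 x w * fz R phi u0 y w =
     \sum_(z in X' | (fz R phi u0 x z == 1) && (fz R phi u0 y z == 1)) fz R phi u0 z w)
  /\ in_Hom phi u0 (witt phi - l) (fun w => fz R phi u0 x w * fz R phi u0 y w).
Proof.
(* Nondegeneracy is not needed: the Witt index is by definition the largest rank
   of a totally isotropic subspace. *)
move=> val _ uX xX yX U l X'; split; last exact: fz_prod_in_Hom.
by move=> w wX; rewrite sum_fz_interval.
Qed.
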